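(* Assume (C1) and (C2). For any $u\in\mathcal{D}$ with $u^+\neq0$ and $u^-\neq0$, there exists a unique pair of positive constants $(s_0,t_0)$ such that $s_0u^++t_0u^-\in\mathcal{M}$.
   Context: Fix real numbers $p,q,r$ with $1<p<q$, $\frac p2$ a positive integer, and $r\ge1$, and functions $a,b,c:\mathbb{Z}\to(0,+\infty)$. Conditions: - (C1) There is $b_0>0$ with $b(n)\ge b_0$ for all $n$ and $b(n)\to+\infty$ as $|n|\to\infty$. - (C2) There is $c_0>0$ with $c(n)\le c_0$ for all $n$ and $\sum_n c(n)<+\infty$. Notation for a real sequence $u=(u(n))_{n\in\mathbb{Z}}$: $\Delta u(n)=u(n+1)-u(n)$, $u^+(n)=\max\{u(n),0\}$, $u^-(n)=\min\{u(n),0\}$. Spaces: - $E$ is the set of real sequences $u$ with $\|u\|:=\big(\sum_n[a(n)|\Delta u(n)|^p+b(n)|u(n)|^p]\big)^{1/p}<\infty$. - $\mathcal{D}=\{u\in E:\sum_n c(n)|u(n)|^q\ln|u(n)|^r<+\infty\}$, where terms with $u(n)=0$ are read as $0$. For $u,v\in\mathcal{D}$: $$\langle I'(u),v\rangle=\sum_n[a(n)|\Delta u(n)|^{p-2}\Delta u(n)\Delta v(n)+b(n)|u(n)|^{p-2}u(n)v(n)]-\sum_n c(n)|u(n)|^{q-2}u(n)v(n)\ln|u(n)|^r.$$ $\mathcal{M}=\{u\in\mathcal{D}:u^+\ne0,\ u^-\neq0,\ \langle I'(u),u^+\rangle=0,\ \langle I'(u),u^-\rangle=0\}$. *)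

From Stdlib Require Import Reals ZArith.
From Coquelicot Require Import Coquelicot.
Open Scope R_scope.

(* Real power of a nonnegative base with the usual conventions at 0:
   0^0 = 1 and 0^y = 0 for y <> 0 (Stdlib's Rpower is only meaningful for x > 0). *)
Definition rpow (x y : R) : R :=
  match Rle_dec x 0 with
  | left _ => match Req_EM_T y 0 with left _ => 1 | right _ => 0 end
  | right _ => Rpower x y
  end.

Definition ex_sumZ (f : Z -> R) : Prop :=
  ex_series (fun n : nat => f (Z.of_nat n)) /\
  ex_series (fun n : nat => f (- Z.of_nat n - 1)%Z).

Definition sumZ (f : Z -> R) : R :=
  Series (fun n : nat => f (Z.of_nat n)) + Series (fun n : nat => f (- Z.of_nat n - 1)%Z).

Definition Delta (u : Z -> R) (n : Z) : R := u (n + 1)%Z - u n.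
Definition upos (u : Z -> R) : Z -> R := fun n => Rmax (u n) 0.
Definition uneg (u : Z -> R) : Z -> R := fun n => Rmin (u n) 0.
Definition zero_seq : Z -> R := fun _ => 0.

Definition cond_C1 (b : Z -> R) : Prop :=
  (exists b0, 0 < b0 /\ forall n, b0 <= b n) /\
  (forall M : R, exists N : Z, forall n : Z, (N < Z.abs n)%Z -> M < b n).

Definition cond_C2 (c : Z -> R) : Prop :=
  (exists c0, 0 < c0 /\ forall n, c n <= c0) /\ ex_sumZ c.

Definition inE (p : R) (a b : Z -> R) (u : Z -> R) : Prop :=
  ex_sumZ (fun n => a n * rpow (Rabs (Delta u n)) p + b n * rpow (Rabs (u n)) p).

Definition logterm (q r : R) (c : Z -> R) (u : Z -> R) (n : Z) : R :=
  if Req_EM_T (u n) 0 then 0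
  else c n * rpow (Rabs (u n)) q * ln (rpow (Rabs (u n)) r).

Definition inD (p q r : R) (a b c : Z -> R) (u : Z -> R) : Prop :=
  inE p a b u /\ ex_sumZ (fun n => Rabs (logterm q r c u n)).

Definition dI (p q r : R) (a b c : Z -> R) (u v : Z -> R) : R :=
  sumZ (fun n => a n * rpow (Rabs (Delta u n)) (p - 2) * Delta u n * Delta v n
               + b n * rpow (Rabs (u n)) (p - 2) * u n * v n)
  - sumZ (fun n => if Req_EM_T (u n) 0 then 0
                   else c n * rpow (Rabs (u n)) (q - 2) * u n * v n
                        * ln (rpow (Rabs (u n)) r)).

Definition inM (p q r : R) (a b c : Z -> R) (u : Z -> R) : Prop :=
  inD p q r a b c u /\ upos u <> zero_seq /\ uneg u <> zero_seq /\
  dI p q r a b c u (upos u) = 0 /\ dI p q r a b c u (uneg u) = 0.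

(** Write [p = 2 k].  For [w = s u^+ + t u^-] with [s, t > 0] the two Nehari conditions
    factor as
      [<I'(w), w^+> = s^p (K_+ (t/s) - g_+ s)]  and  [<I'(w), w^-> = t^p (K_- (s/t) - g_- t)],
    where [K_+-] and [g_+-] are [hom_part] and [nehari_g] at [u] and [-u].  Because [p] is
    even and [Delta u^+], [Delta u^-] have the same sign, the gradient terms are polynomials
    in [t/s] (resp. [s/t]) with nonnegative coefficients, so [K_+-] are positive,
    nondecreasing and continuous on [[0, oo)]; and [g_+-(s) = s^(q-p) (r B_+- ln s + C_+-)]
    with [B_+- > 0] increases strictly to [+oo] past its zero.  Hence for each [t] the
    equation [g_+ s = K_+ (t/s)] has a root [s(t)], nondecreasing in [t], and symmetrically
    for the second equation; the composite of the two root maps is a nondecreasing self-map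
    of a compact interval, whose fixed point gives a solution.  Two solutions have the same
    ratio [t/s], since a larger ratio forces a larger [s] but a smaller [t]; monotonicity of
    [g_+] then identifies them. *)

From Stdlib Require Import Reals ZArith Lra Lia Psatz Ranalysis5.
From Stdlib Require Import Classical FunctionalExtensionality ClassicalEpsilon.
From Coquelicot Require Import Coquelicot.
Open Scope R_scope.

Lemma Series_zero : Series (fun _ : nat => 0) = 0.
Proof.
  rewrite (Series_ext _ (fun _ : nat => 0 * 0)) by (intro; ring).
  rewrite Series_scal_l; ring.
Qed.

Lemma Series_nonneg (f : nat -> R) :
  ex_series f -> (forall n, 0 <= f n) -> 0 <= Series f.
Proof.
  intros Hf Hpos; rewrite <- Series_zero.
  apply Series_le; [intro n; split; [lra | apply Hpos] | exact Hf].
Qed.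

Lemma Series_le_gen (f g : nat -> R) :
  ex_series f -> ex_series g -> (forall n, f n <= g n) -> Series f <= Series g.
Proof.
  intros Hf Hg Hfg.
  assert (Hdiff : 0 <= Series (fun n => g n - f n)).
  { apply Series_nonneg; [apply (ex_series_minus g f); assumption |].
    intro n; specialize (Hfg n); lra. }
  rewrite Series_minus in Hdiff by assumption; lra.
Qed.

Lemma ex_series_Rabs_le (f g : nat -> R) :
  (forall n, Rabs (f n) <= g n) -> ex_series g -> ex_series f.
Proof. intros Hfg Hg; apply (ex_series_le f g); assumption. Qed.

Lemma Series_Rabs_le (f g : nat -> R) :
  ex_series g -> (forall n, Rabs (f n) <= g n) -> Rabs (Series f) <= Series g.
Proof.
  intros Hg Hfg.
  assert (Habs : ex_series (fun n => Rabs (f n))).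
  { apply (ex_series_Rabs_le _ g); [intro n; rewrite Rabs_Rabsolu; apply Hfg | exact Hg]. }
  eapply Rle_trans; [apply Series_Rabs, Habs |].
  apply Series_le_gen; assumption.
Qed.

Lemma Series_ge_term (f : nat -> R) (k : nat) :
  (forall n, 0 <= f n) -> ex_series f -> f k <= Series f.
Proof.
  intros Hpos Hf.
  rewrite (Series_incr_n f (S k)) by (lia || assumption); simpl pred.
  assert (Htail : 0 <= Series (fun n => f (S k + n)%nat)).
  { apply Series_nonneg; [apply (ex_series_incr_n f (S k)), Hf | intro; apply Hpos]. }
  assert (f k <= sum_f_R0 f k).
  { destruct k as [|k]; simpl; [lra |].
    pose proof (cond_pos_sum f k Hpos); lra. }
  lra.
Qed.

Lemma ex_sumZ_le (f g : Z -> R) :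
  (forall n, Rabs (f n) <= g n) -> ex_sumZ g -> ex_sumZ f.
Proof.
  intros Hfg [Hg1 Hg2]; split;
    [apply (ex_series_Rabs_le _ _ (fun n => Hfg (Z.of_nat n)) Hg1)
    | apply (ex_series_Rabs_le _ _ (fun n => Hfg (- Z.of_nat n - 1)%Z) Hg2)].
Qed.

Lemma ex_sumZ_ext (f g : Z -> R) : (forall n, f n = g n) -> ex_sumZ g -> ex_sumZ f.
Proof. intros Hfg; replace f with g; [trivial | apply functional_extensionality; auto]. Qed.

Lemma ex_sumZ_plus (f g : Z -> R) :
  ex_sumZ f -> ex_sumZ g -> ex_sumZ (fun n => f n + g n).
Proof.
  intros [Hf1 Hf2] [Hg1 Hg2]; split;
    [apply (ex_series_plus (fun n => f (Z.of_nat n)) (fun n => g (Z.of_nat n)))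
    | apply (ex_series_plus (fun n => f (- Z.of_nat n - 1)%Z) (fun n => g (- Z.of_nat n - 1)%Z))];
    assumption.
Qed.

Lemma ex_sumZ_scal (k : R) (f : Z -> R) : ex_sumZ f -> ex_sumZ (fun n => k * f n).
Proof.
  intros [Hf1 Hf2]; split;
    [apply (ex_series_scal_l k (fun n => f (Z.of_nat n)))
    | apply (ex_series_scal_l k (fun n => f (- Z.of_nat n - 1)%Z))];
    assumption.
Qed.

Lemma sumZ_ext (f g : Z -> R) : (forall n, f n = g n) -> sumZ f = sumZ g.
Proof. intros Hfg; replace f with g; [reflexivity | apply functional_extensionality; auto]. Qed.

Lemma sumZ_scal (k : R) (f : Z -> R) : sumZ (fun n => k * f n) = k * sumZ f.
Proof. unfold sumZ; rewrite !Series_scal_l; ring. Qed.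

Lemma sumZ_plus (f g : Z -> R) :
  ex_sumZ f -> ex_sumZ g -> sumZ (fun n => f n + g n) = sumZ f + sumZ g.
Proof. intros [] []; unfold sumZ; rewrite !Series_plus by assumption; ring. Qed.

Lemma sumZ_minus (f g : Z -> R) :
  ex_sumZ f -> ex_sumZ g -> sumZ (fun n => f n - g n) = sumZ f - sumZ g.
Proof. intros [] []; unfold sumZ; rewrite !Series_minus by assumption; ring. Qed.

Lemma sumZ_le (f g : Z -> R) :
  ex_sumZ f -> ex_sumZ g -> (forall n, f n <= g n) -> sumZ f <= sumZ g.
Proof. intros [] [] Hfg; unfold sumZ; apply Rplus_le_compat; apply Series_le_gen; auto. Qed.

Lemma sumZ_Rabs_le (f g : Z -> R) :
  ex_sumZ g -> (forall n, Rabs (f n) <= g n) -> Rabs (sumZ f) <= sumZ g.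
Proof.
  intros [] Hfg; unfold sumZ.
  eapply Rle_trans; [apply Rabs_triang |].
  apply Rplus_le_compat; apply Series_Rabs_le; auto.
Qed.

Lemma sumZ_ge_term (f : Z -> R) (k : Z) :
  (forall n, 0 <= f n) -> ex_sumZ f -> f k <= sumZ f.
Proof.
  intros Hpos [Hf1 Hf2]; unfold sumZ.
  pose proof (Series_nonneg _ Hf1 (fun n => Hpos _)).
  pose proof (Series_nonneg _ Hf2 (fun n => Hpos _)).
  destruct (Z_le_gt_dec 0 k) as [Hk | Hk].
  - pose proof (Series_ge_term _ (Z.to_nat k) (fun n => Hpos _) Hf1) as Hterm.
    simpl in Hterm; rewrite Z2Nat.id in Hterm by assumption; lra.
  - pose proof (Series_ge_term _ (Z.to_nat (- k - 1)) (fun n => Hpos _) Hf2) as Hterm.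
    simpl in Hterm; rewrite Z2Nat.id in Hterm by lia.
    replace (- (- k - 1) - 1)%Z with k in Hterm by lia; lra.
Qed.

Lemma sumZ_nonneg (f : Z -> R) : ex_sumZ f -> (forall n, 0 <= f n) -> 0 <= sumZ f.
Proof. intros Hf Hpos; pose proof (sumZ_ge_term f 0 Hpos Hf); pose proof (Hpos 0%Z); lra. Qed.

Lemma pow_even_Rabs (y : R) (k : nat) : Rabs y ^ (2 * k) = y ^ (2 * k).
Proof.
  rewrite !pow_sqr, <- Rabs_mult, Rabs_right; [reflexivity |].
  apply Rle_ge, Rle_0_sqr.
Qed.

Lemma pow_even_ge0 (y : R) (j : nat) : 0 <= y ^ (2 * j + 2).
Proof.
  replace (2 * j + 2)%nat with (2 * (j + 1))%nat by lia.
  rewrite pow_sqr; apply pow_le, Rle_0_sqr.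
Qed.

Lemma pow_even_le_Rabs (x y : R) (j : nat) :
  Rabs x <= y -> x ^ (2 * j + 2) <= y ^ (2 * j + 2).
Proof.
  intros Hxy; replace (2 * j + 2)%nat with (2 * (j + 1))%nat by lia.
  rewrite <- pow_even_Rabs; apply pow_incr; split; [apply Rabs_pos | exact Hxy].
Qed.

Lemma pow_odd_opp (x : R) (j : nat) : (- x) ^ (2 * j + 1) = - x ^ (2 * j + 1).
Proof.
  replace (- x) with (-1 * x) by ring; rewrite Rpow_mult_distr.
  replace (2 * j + 1)%nat with (S (2 * j)) by lia; rewrite pow_1_odd; ring.
Qed.

Lemma rpow_of_pos (x y : R) : 0 < x -> rpow x y = Rpower x y.
Proof. intro Hx; unfold rpow; destruct (Rle_dec x 0); [lra | reflexivity]. Qed.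

Lemma rpow_zero_l (y : R) : y <> 0 -> rpow 0 y = 0.
Proof.
  intro Hy; unfold rpow; destruct (Rle_dec 0 0); [| lra].
  destruct (Req_EM_T y 0); [contradiction | reflexivity].
Qed.

Lemma rpow_ge0 (x y : R) : 0 <= rpow x y.
Proof.
  unfold rpow; destruct (Rle_dec x 0); [destruct (Req_EM_T y 0); lra |].
  left; apply exp_pos.
Qed.

Lemma rpow_Rabs_even (y : R) (j : nat) : rpow (Rabs y) (INR (2 * j + 2)) = y ^ (2 * j + 2).
Proof.
  destruct (Req_dec y 0) as [-> | Hy].
  - rewrite Rabs_R0, pow_i by lia; apply rpow_zero_l.
    rewrite plus_INR; pose proof (pos_INR (2 * j)); change (INR 2) with (1 + 1); lra.
  - assert (Habs : 0 < Rabs y) by (apply Rabs_pos_lt, Hy).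
    rewrite rpow_of_pos, Rpower_pow by exact Habs.
    replace (2 * j + 2)%nat with (2 * (j + 1))%nat by lia; apply pow_even_Rabs.
Qed.

Lemma rpow_Rabs_odd (y : R) (j : nat) :
  rpow (Rabs y) (INR (2 * j + 2) - 2) * y = y ^ (2 * j + 1).
Proof.
  replace (INR (2 * j + 2) - 2) with (INR (2 * j)) by (rewrite !plus_INR; simpl; ring).
  destruct (Req_dec y 0) as [-> | Hy]; [rewrite pow_i by lia; ring |].
  assert (Habs : 0 < Rabs y) by (apply Rabs_pos_lt, Hy).
  rewrite rpow_of_pos, Rpower_pow, pow_even_Rabs by exact Habs.
  replace (2 * j + 1)%nat with (S (2 * j)) by lia; simpl; ring.
Qed.

Lemma upos_ge0 (v : Z -> R) n : 0 <= upos v n.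
Proof. unfold upos, Rmax; destruct Rle_dec; lra. Qed.

Lemma uneg_le0 (v : Z -> R) n : uneg v n <= 0.
Proof. unfold uneg, Rmin; destruct Rle_dec; lra. Qed.

Lemma upos_mul_uneg (v : Z -> R) n : upos v n * uneg v n = 0.
Proof. unfold upos, uneg, Rmax, Rmin; repeat destruct Rle_dec; nra. Qed.

Lemma upos_add_uneg (v : Z -> R) n : upos v n + uneg v n = v n.
Proof. unfold upos, uneg, Rmax, Rmin; repeat destruct Rle_dec; lra. Qed.

Lemma upos_of_pos (v : Z -> R) n : 0 < v n -> upos v n = v n.
Proof. unfold upos, Rmax; destruct Rle_dec; lra. Qed.

Lemma upos_of_le0 (v : Z -> R) n : v n <= 0 -> upos v n = 0.
Proof. unfold upos, Rmax; destruct Rle_dec; lra. Qed.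

Lemma uneg_of_le0 (v : Z -> R) n : v n <= 0 -> uneg v n = v n.
Proof. unfold uneg, Rmin; destruct Rle_dec; lra. Qed.

Lemma uneg_of_ge0 (v : Z -> R) n : 0 <= v n -> uneg v n = 0.
Proof. unfold uneg, Rmin; destruct Rle_dec; lra. Qed.

Lemma upos_opp (v : Z -> R) : upos (fun n => - v n) = fun n => - uneg v n.
Proof.
  apply functional_extensionality; intro n.
  unfold upos, uneg, Rmax, Rmin; repeat destruct Rle_dec; lra.
Qed.

Lemma uneg_opp (v : Z -> R) : uneg (fun n => - v n) = fun n => - upos v n.
Proof.
  apply functional_extensionality; intro n.
  unfold upos, uneg, Rmax, Rmin; repeat destruct Rle_dec; lra.
Qed.

Lemma upos_pow_le (v : Z -> R) n j : upos v n ^ (2 * j + 2) <= v n ^ (2 * j + 2).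
Proof.
  destruct (Rlt_le_dec 0 (v n)).
  - rewrite upos_of_pos by assumption; lra.
  - rewrite upos_of_le0, pow_i; [apply pow_even_ge0 | lia | assumption].
Qed.

Lemma nonzero_seq_point (w : Z -> R) : w <> zero_seq -> exists n, w n <> 0.
Proof.
  intros Hw; apply NNPP; intros Hnone; apply Hw.
  apply functional_extensionality; intro n.
  apply NNPP; intro Hn; apply Hnone; exists n; exact Hn.
Qed.

Lemma Delta_opp (w : Z -> R) n : Delta (fun k => - w k) n = - Delta w n.
Proof. unfold Delta; ring. Qed.

(** Since [upos] and [uneg] are both nondecreasing functions of [v n], their increments
    have the same sign. *)
Lemma Delta_parts_same_sign (v : Z -> R) n :
  (0 <= Delta (upos v) n /\ 0 <= Delta (uneg v) n) \/
  (Delta (upos v) n <= 0 /\ Delta (uneg v) n <= 0).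
Proof. unfold Delta, upos, uneg, Rmax, Rmin; repeat destruct Rle_dec; lra. Qed.

Lemma Rabs_Delta_parts (v : Z -> R) n :
  Rabs (Delta (upos v) n) + Rabs (Delta (uneg v) n) = Rabs (Delta v n).
Proof.
  replace (Delta v n) with (Delta (upos v) n + Delta (uneg v) n)
    by (unfold Delta; rewrite <- (upos_add_uneg v n), <- (upos_add_uneg v (n + 1)); ring).
  destruct (Delta_parts_same_sign v n) as [[] | []].
  - rewrite !Rabs_right by lra; reflexivity.
  - rewrite !Rabs_left1 by lra; lra.
Qed.

Lemma Delta_parts_pow (v : Z -> R) n j :
  (Rabs (Delta (upos v) n) + Rabs (Delta (uneg v) n)) ^ (2 * j + 2) = Delta v n ^ (2 * j + 2).
Proof.
  rewrite Rabs_Delta_parts; replace (2 * j + 2)%nat with (2 * (j + 1))%nat by lia.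
  apply pow_even_Rabs.
Qed.

(** * Factoring the Nehari functionals along [s u^+ + t u^-] *)

Definition scale_parts (v : Z -> R) (s t : R) : Z -> R := fun n => s * upos v n + t * uneg v n.

Lemma upos_scale_parts (v : Z -> R) s t n :
  0 < s -> 0 < t -> upos (scale_parts v s t) n = s * upos v n.
Proof.
  intros Hs Ht; unfold scale_parts, upos at 1.
  pose proof (upos_ge0 v n); pose proof (uneg_le0 v n).
  destruct (Rmult_integral _ _ (upos_mul_uneg v n)) as [-> | ->];
    unfold Rmax; destruct Rle_dec; nra.
Qed.

Lemma uneg_scale_parts (v : Z -> R) s t n :
  0 < s -> 0 < t -> uneg (scale_parts v s t) n = t * uneg v n.
Proof.
  intros Hs Ht; unfold scale_parts, uneg at 1.
  pose proof (upos_ge0 v n); pose proof (uneg_le0 v n).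
  destruct (Rmult_integral _ _ (upos_mul_uneg v n)) as [-> | ->];
    unfold Rmin; destruct Rle_dec; nra.
Qed.

Lemma scale_parts_opp (v : Z -> R) s t :
  scale_parts (fun n => - v n) t s = fun n => - scale_parts v s t n.
Proof.
  unfold scale_parts; rewrite upos_opp, uneg_opp.
  apply functional_extensionality; intro n; ring.
Qed.

Definition hom_term (j : nat) (a b v : Z -> R) (x : R) (n : Z) : R :=
  a n * ((Rabs (Delta (upos v) n) + x * Rabs (Delta (uneg v) n)) ^ (2 * j + 1)
         * Rabs (Delta (upos v) n))
  + b n * upos v n ^ (2 * j + 2).

Definition hom_part (j : nat) (a b v : Z -> R) (x : R) : R := sumZ (hom_term j a b v x).

Definition q_mass (q : R) (c v : Z -> R) : R := sumZ (fun n => c n * rpow (upos v n) q).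

Definition log_mass (q r : R) (c v : Z -> R) : R := sumZ (logterm q r c (upos v)).

Definition log_part (e R0 C s : R) : R := Rpower s e * (R0 * ln s + C).

Definition nehari_g (j : nat) (q r : R) (c v : Z -> R) : R -> R :=
  log_part (q - INR (2 * j + 2)) (r * q_mass q c v) (log_mass q r c v).

Lemma odd_pow_same_sign_mul (j : nat) (x y s t : R) : 0 < s ->
  (0 <= x /\ 0 <= y) \/ (x <= 0 /\ y <= 0) ->
  (s * x + t * y) ^ (2 * j + 1) * (s * x)
  = s ^ (2 * j + 2) * ((Rabs x + t / s * Rabs y) ^ (2 * j + 1) * Rabs x).
Proof.
  intros Hs Hsign; replace (2 * j + 2)%nat with (S (2 * j + 1)) by lia.
  destruct Hsign as [[Hx Hy] | [Hx Hy]].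
  - rewrite !Rabs_right by lra.
    replace (s * x + t * y) with (s * (x + t / s * y)) by (field; lra).
    rewrite Rpow_mult_distr; simpl; ring.
  - rewrite !Rabs_left1 by lra.
    replace (s * x + t * y) with (- (s * (- x + t / s * - y))) by (field; lra).
    rewrite pow_odd_opp, Rpow_mult_distr; simpl; ring.
Qed.

Lemma odd_pow_disjoint_mul (j : nat) (x y s t : R) :
  x * y = 0 -> (s * x + t * y) ^ (2 * j + 1) * (s * x) = s ^ (2 * j + 2) * x ^ (2 * j + 2).
Proof.
  intros Hxy; destruct (Req_dec x 0) as [-> | Hx]; [rewrite pow_i by lia; ring |].
  replace y with 0 by (apply (Rmult_eq_reg_l x); lra).
  rewrite Rmult_0_r, Rplus_0_r, Rmult_comm, tech_pow_Rmult, <- Rpow_mult_distr.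
  f_equal; lia.
Qed.

Lemma hom_term_scale_parts (j : nat) (a b v : Z -> R) s t n : 0 < s -> 0 < t ->
  a n * rpow (Rabs (Delta (scale_parts v s t) n)) (INR (2 * j + 2) - 2)
      * Delta (scale_parts v s t) n * Delta (upos (scale_parts v s t)) n
  + b n * rpow (Rabs (scale_parts v s t n)) (INR (2 * j + 2) - 2)
      * scale_parts v s t n * upos (scale_parts v s t) n
  = s ^ (2 * j + 2) * hom_term j a b v (t / s) n.
Proof.
  intros Hs Ht.
  assert (Hw : Delta (scale_parts v s t) n = s * Delta (upos v) n + t * Delta (uneg v) n)
    by (unfold Delta, scale_parts; ring).
  assert (Hwpos : Delta (upos (scale_parts v s t)) n = s * Delta (upos v) n)
    by (unfold Delta; rewrite !upos_scale_parts by assumption; ring).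
  rewrite upos_scale_parts, Hwpos by assumption.
  rewrite (Rmult_assoc (a n)), (Rmult_assoc (b n)), !rpow_Rabs_odd, Hw, !Rmult_assoc.
  rewrite odd_pow_same_sign_mul by (assumption || apply Delta_parts_same_sign).
  unfold scale_parts; rewrite odd_pow_disjoint_mul by apply upos_mul_uneg.
  unfold hom_term; ring.
Qed.

Lemma Rpower_sub2_mul (x q : R) : 0 < x -> Rpower x (q - 2) * x * x = Rpower x q.
Proof.
  intro Hx; rewrite <- (Rpower_1 x) at 2 3 by assumption.
  rewrite <- !Rpower_plus; f_equal; ring.
Qed.

Lemma log_term_scale_parts (q r : R) (c v : Z -> R) s t n : 0 < s -> 0 < t -> q <> 0 ->
  (if Req_EM_T (scale_parts v s t n) 0 then 0
   else c n * rpow (Rabs (scale_parts v s t n)) (q - 2) * scale_parts v s t n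
        * upos (scale_parts v s t) n * ln (rpow (Rabs (scale_parts v s t n)) r))
  = Rpower s q * (r * ln s * (c n * rpow (upos v n) q) + logterm q r c (upos v) n).
Proof.
  intros Hs Ht Hq; rewrite upos_scale_parts by assumption; unfold logterm.
  destruct (Rlt_le_dec 0 (v n)) as [Hv | Hv].
  - replace (scale_parts v s t n) with (s * v n)
      by (unfold scale_parts; rewrite upos_of_pos, uneg_of_ge0 by lra; ring).
    rewrite upos_of_pos by assumption.
    destruct (Req_EM_T (s * v n) 0); [nra |].
    destruct (Req_EM_T (v n) 0); [lra |].
    rewrite !Rabs_right, !rpow_of_pos by nra.
    rewrite 2!(Rmult_assoc (c n)), Rpower_sub2_mul by nra.
    rewrite !ln_Rpower, ln_mult, <- Rpower_mult_distr by assumption; ring.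
  - rewrite upos_of_le0, rpow_zero_l by assumption.
    destruct (Req_EM_T 0 0); [| lra].
    destruct (Req_EM_T (scale_parts v s t n) 0); ring.
Qed.

Lemma dI_scale_parts_upos (j : nat) (q r : R) (a b c v : Z -> R) s t :
  q <> 0 -> 0 < s -> 0 < t ->
  ex_sumZ (fun n => c n * rpow (upos v n) q) -> ex_sumZ (logterm q r c (upos v)) ->
  dI (INR (2 * j + 2)) q r a b c (scale_parts v s t) (upos (scale_parts v s t))
  = s ^ (2 * j + 2) * (hom_part j a b v (t / s) - nehari_g j q r c v s).
Proof.
  intros Hq Hs Ht Hmass Hlog; unfold dI.
  rewrite (sumZ_ext _ _ (fun n => hom_term_scale_parts j a b v s t n Hs Ht)).
  rewrite (sumZ_ext _ _ (fun n => log_term_scale_parts q r c v s t n Hs Ht Hq)).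
  rewrite !sumZ_scal, sumZ_plus, sumZ_scal; [| apply ex_sumZ_scal, Hmass | exact Hlog].
  replace (Rpower s q) with (Rpower s (q - INR (2 * j + 2)) * s ^ (2 * j + 2))
    by (rewrite <- Rpower_pow, <- Rpower_plus by assumption; f_equal; ring).
  unfold hom_part, nehari_g, log_part, q_mass, log_mass; ring.
Qed.

Lemma dI_opp (p q r : R) (a b c w z : Z -> R) :
  dI p q r a b c (fun n => - w n) (fun n => - z n) = dI p q r a b c w z.
Proof.
  unfold dI; f_equal; apply sumZ_ext; intro n.
  - rewrite !Delta_opp, !Rabs_Ropp; ring.
  - rewrite !Rabs_Ropp.
    destruct (Req_EM_T (- w n) 0), (Req_EM_T (w n) 0); try lra; ring.
Qed.

Lemma dI_scale_parts_uneg (j : nat) (q r : R) (a b c v : Z -> R) s t :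
  q <> 0 -> 0 < s -> 0 < t ->
  ex_sumZ (fun n => c n * rpow (upos (fun k => - v k) n) q) ->
  ex_sumZ (logterm q r c (upos (fun k => - v k))) ->
  dI (INR (2 * j + 2)) q r a b c (scale_parts v s t) (uneg (scale_parts v s t))
  = t ^ (2 * j + 2) * (hom_part j a b (fun k => - v k) (s / t)
                       - nehari_g j q r c (fun k => - v k) t).
Proof.
  intros Hq Hs Ht Hmass Hlog.
  rewrite <- dI_scale_parts_upos by assumption.
  rewrite scale_parts_opp, upos_opp, <- dI_opp.
  f_equal; apply functional_extensionality; intro n; ring.
Qed.

Lemma pow_sub_pow_le (A B M : R) (m : nat) : Rabs A <= M -> Rabs B <= M ->
  Rabs (A ^ S m - B ^ S m) <= INR (S m) * M ^ m * Rabs (A - B).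
Proof.
  intros HA HB; assert (HM : 0 <= M) by (pose proof (Rabs_pos A); lra).
  induction m as [| m IH]; [simpl; rewrite !Rmult_1_r; lra |].
  replace (A ^ S (S m) - B ^ S (S m)) with (A * (A ^ S m - B ^ S m) + B ^ S m * (A - B))
    by (simpl; ring).
  eapply Rle_trans; [apply Rabs_triang |]; rewrite !Rabs_mult.
  assert (Rabs A * Rabs (A ^ S m - B ^ S m) <= M * (INR (S m) * M ^ m * Rabs (A - B)))
    by (apply Rmult_le_compat; auto using Rabs_pos).
  assert (Rabs (B ^ S m) <= M ^ S m)
    by (rewrite <- RPow_abs; apply pow_incr; split; auto using Rabs_pos).
  assert (Rabs (B ^ S m) * Rabs (A - B) <= M ^ S m * Rabs (A - B))
    by (apply Rmult_le_compat_r; auto using Rabs_pos).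
  rewrite S_INR; simpl pow in *; nra.
Qed.

Lemma lipschitz_continuity_pt (f : R -> R) (x0 : R) :
  (forall X, 0 <= X -> exists L, 0 <= L /\ forall x y, Rabs x <= X -> Rabs y <= X ->
     Rabs (f x - f y) <= L * Rabs (x - y)) ->
  continuity_pt f x0.
Proof.
  intros Hlip eps Heps.
  destruct (Hlip (Rabs x0 + 1)) as [L [HL Hf]]; [pose proof (Rabs_pos x0); lra |].
  exists (Rmin 1 (eps / (L + 1))); split.
  { apply Rmin_pos; [lra | apply Rdiv_lt_0_compat; lra]. }
  intros x [_ Hx]; simpl in *; unfold R_dist in *.
  assert (Hx1 : Rabs (x - x0) < 1) by (eapply Rlt_le_trans; [apply Hx | apply Rmin_l]).
  assert (Hxe : Rabs (x - x0) < eps / (L + 1)) by (eapply Rlt_le_trans; [apply Hx | apply Rmin_r]).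
  assert (Hxb : Rabs x <= Rabs x0 + 1).
  { replace x with ((x - x0) + x0) by ring.
    eapply Rle_trans; [apply Rabs_triang | lra]. }
  specialize (Hf x x0 Hxb ltac:(lra)).
  assert (L * Rabs (x - x0) <= L * (eps / (L + 1))) by (apply Rmult_le_compat_l; lra).
  assert (L * (eps / (L + 1)) < eps).
  { replace (L * (eps / (L + 1))) with (eps - eps / (L + 1)) by (field; lra).
    assert (0 < eps / (L + 1)) by (apply Rdiv_lt_0_compat; lra); lra. }
  lra.
Qed.

Lemma hom_base_bound (al be x : R) (m : nat) : 0 <= al -> 0 <= be ->
  Rabs ((al + x * be) ^ m * al) <= (1 + Rabs x) ^ m * (al + be) ^ S m.
Proof.
  intros Hal Hbe; rewrite Rabs_mult, <- RPow_abs, (Rabs_right al) by lra.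
  assert (Hbase : Rabs (al + x * be) <= (1 + Rabs x) * (al + be)).
  { eapply Rle_trans; [apply Rabs_triang |].
    rewrite Rabs_mult, (Rabs_right al), (Rabs_right be) by lra.
    pose proof (Rabs_pos x); nra. }
  assert (Hpow : Rabs (al + x * be) ^ m <= (1 + Rabs x) ^ m * (al + be) ^ m)
    by (rewrite <- Rpow_mult_distr; apply pow_incr; split; [apply Rabs_pos | exact Hbase]).
  simpl.
  assert (0 <= (1 + Rabs x) ^ m) by (apply pow_le; pose proof (Rabs_pos x); lra).
  assert (0 <= (al + be) ^ m) by (apply pow_le; lra).
  assert (0 <= Rabs (al + x * be) ^ m) by (apply pow_le, Rabs_pos).
  nra.
Qed.

Lemma hom_base_lipschitz (al be x y X : R) (j : nat) :
  0 <= al -> 0 <= be -> Rabs x <= X -> Rabs y <= X ->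
  Rabs ((al + x * be) ^ (2 * j + 1) * al - (al + y * be) ^ (2 * j + 1) * al)
  <= INR (2 * j + 1) * (1 + X) ^ (2 * j) * (al + be) ^ (2 * j + 2) * Rabs (x - y).
Proof.
  intros Hal Hbe Hx Hy.
  assert (Hbase : forall z, Rabs z <= X -> Rabs (al + z * be) <= (1 + X) * (al + be)).
  { intros z Hz; eapply Rle_trans; [apply Rabs_triang |].
    rewrite Rabs_mult, (Rabs_right al), (Rabs_right be) by lra.
    pose proof (Rabs_pos z); nra. }
  pose proof (pow_sub_pow_le _ _ _ (2 * j) (Hbase x Hx) (Hbase y Hy)) as Hdiff.
  replace (al + x * be - (al + y * be)) with ((x - y) * be) in Hdiff by ring.
  rewrite Rabs_mult, (Rabs_right be), Rpow_mult_distr in Hdiff by lra.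
  replace (S (2 * j)) with (2 * j + 1)%nat in Hdiff by lia.
  rewrite <- Rmult_minus_distr_r, Rabs_mult, (Rabs_right al) by lra.
  replace ((al + be) ^ (2 * j + 2)) with ((al + be) ^ (2 * j) * (al + be) ^ 2)
    by (rewrite <- pow_add; f_equal; lia).
  assert (0 <= INR (2 * j + 1) * (1 + X) ^ (2 * j) * (al + be) ^ (2 * j) * Rabs (x - y)).
  { pose proof (pos_INR (2 * j + 1)); pose proof (Rabs_pos x).
    repeat apply Rmult_le_pos; try apply pow_le; try lra; apply Rabs_pos. }
  assert (be * al <= (al + be) ^ 2) by (simpl; nra).
  nra.
Qed.

Section HomPart.

Variables (j : nat) (a b v : Z -> R).
Hypotheses (Ha : forall n, 0 < a n) (Hb : forall n, 0 < b n).
Hypothesis Hgrad : ex_sumZ (fun n => a n * Delta v n ^ (2 * j + 2)).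
Hypothesis Hmass : ex_sumZ (fun n => b n * v n ^ (2 * j + 2)).

Lemma ex_sumZ_hom_term (x : R) : ex_sumZ (hom_term j a b v x).
Proof.
  apply (ex_sumZ_le _ (fun n => (1 + Rabs x) ^ (2 * j + 1) * (a n * Delta v n ^ (2 * j + 2))
                                + b n * v n ^ (2 * j + 2))).
  2: apply ex_sumZ_plus; [apply ex_sumZ_scal |]; assumption.
  intro n; unfold hom_term; eapply Rle_trans; [apply Rabs_triang |].
  pose proof (Ha n); pose proof (Hb n).
  rewrite !Rabs_mult, (Rabs_right (a n)), (Rabs_right (b n)) by lra.
  rewrite <- (RPow_abs (upos v n)), (Rabs_right (upos v n)) by apply Rle_ge, upos_ge0.
  pose proof (hom_base_bound (Rabs (Delta (upos v) n)) (Rabs (Delta (uneg v) n)) x (2 * j + 1)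
                (Rabs_pos _) (Rabs_pos _)) as Hbound.
  replace (S (2 * j + 1)) with (2 * j + 2)%nat in Hbound by lia.
  rewrite Delta_parts_pow, Rabs_mult in Hbound.
  pose proof (upos_pow_le v n j).
  apply Rplus_le_compat; [nra | apply Rmult_le_compat_l; lra].
Qed.

Lemma hom_part_mono (x y : R) : 0 <= x -> x <= y -> hom_part j a b v x <= hom_part j a b v y.
Proof.
  intros Hx Hxy; apply sumZ_le; try apply ex_sumZ_hom_term.
  intro n; unfold hom_term; apply Rplus_le_compat_r, Rmult_le_compat_l; [left; apply Ha |].
  apply Rmult_le_compat_r; [apply Rabs_pos |]; apply pow_incr.
  pose proof (Rabs_pos (Delta (upos v) n)); pose proof (Rabs_pos (Delta (uneg v) n)); nra.
Qed.

Lemma hom_grad_term_ge0 (x : R) n : 0 <= x ->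
  0 <= a n * ((Rabs (Delta (upos v) n) + x * Rabs (Delta (uneg v) n)) ^ (2 * j + 1)
              * Rabs (Delta (upos v) n)).
Proof.
  intro Hx; pose proof (Rabs_pos (Delta (upos v) n)); pose proof (Rabs_pos (Delta (uneg v) n)).
  apply Rmult_le_pos; [left; apply Ha |].
  apply Rmult_le_pos; [apply pow_le; nra | assumption].
Qed.

Lemma hom_part_pos (x : R) : upos v <> zero_seq -> 0 <= x -> 0 < hom_part j a b v x.
Proof.
  intros Hv Hx; destruct (nonzero_seq_point _ Hv) as [n0 Hn0].
  assert (Hterm : forall n, 0 <= hom_term j a b v x n).
  { intro n; unfold hom_term; pose proof (hom_grad_term_ge0 x n Hx).
    pose proof (Hb n); pose proof (pow_le _ (2 * j + 2) (upos_ge0 v n)); nra. }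
  eapply Rlt_le_trans; [| apply (sumZ_ge_term _ n0 Hterm), ex_sumZ_hom_term].
  unfold hom_term; pose proof (hom_grad_term_ge0 x n0 Hx).
  assert (0 < b n0 * upos v n0 ^ (2 * j + 2))
    by (apply Rmult_lt_0_compat; [apply Hb | apply pow_lt; pose proof (upos_ge0 v n0); lra]).
  lra.
Qed.

Lemma hom_part_lipschitz (x y X : R) : Rabs x <= X -> Rabs y <= X ->
  Rabs (hom_part j a b v x - hom_part j a b v y)
  <= INR (2 * j + 1) * (1 + X) ^ (2 * j) * sumZ (fun n => a n * Delta v n ^ (2 * j + 2))
     * Rabs (x - y).
Proof.
  intros Hx Hy; unfold hom_part; rewrite <- sumZ_minus by apply ex_sumZ_hom_term.
  rewrite Rmult_comm, <- !sumZ_scal.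
  apply sumZ_Rabs_le; [do 2 apply ex_sumZ_scal; exact Hgrad |].
  intro n; unfold hom_term.
  pose proof (hom_base_lipschitz _ _ x y X j (Rabs_pos (Delta (upos v) n))
                (Rabs_pos (Delta (uneg v) n)) Hx Hy) as Hlip.
  rewrite Delta_parts_pow in Hlip.
  replace (_ + b n * _ - _) with
    (a n * ((Rabs (Delta (upos v) n) + x * Rabs (Delta (uneg v) n)) ^ (2 * j + 1)
             * Rabs (Delta (upos v) n)
           - (Rabs (Delta (upos v) n) + y * Rabs (Delta (uneg v) n)) ^ (2 * j + 1)
             * Rabs (Delta (upos v) n))) by ring.
  pose proof (Ha n); rewrite Rabs_mult, (Rabs_right (a n)) by lra; nra.
Qed.

Lemma hom_part_continuous (x0 : R) : continuity_pt (hom_part j a b v) x0.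
Proof.
  apply lipschitz_continuity_pt; intros X HX.
  set (S := sumZ (fun n => a n * Delta v n ^ (2 * j + 2))).
  exists (INR (2 * j + 1) * (1 + X) ^ (2 * j) * S); split.
  - assert (0 <= S).
    { apply sumZ_nonneg; [exact Hgrad |].
      intro n; pose proof (Ha n); pose proof (pow_even_ge0 (Delta v n) j); nra. }
    pose proof (pos_INR (2 * j + 1)); pose proof (pow_le (1 + X) (2 * j) ltac:(lra)).
    repeat apply Rmult_le_pos; assumption.
  - intros x y; apply hom_part_lipschitz.
Qed.

End HomPart.

Lemma exp_le_mono (x y : R) : x <= y -> exp x <= exp y.
Proof.
  intro Hxy; destruct (Rle_lt_or_eq_dec _ _ Hxy) as [Hlt | ->]; [| lra].
  left; apply exp_increasing, Hlt.
Qed.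

Lemma ln_ge_of_exp_le (x s : R) : exp x <= s -> x <= ln s.
Proof.
  intro Hs; rewrite <- (ln_exp x).
  destruct (Rle_lt_or_eq_dec _ _ Hs) as [Hlt | <-]; [| lra].
  left; apply ln_increasing; [apply exp_pos | exact Hlt].
Qed.

Section LogPart.

Variables (e R0 C : R).
Hypotheses (He : 0 < e) (HR0 : 0 < R0).

Lemma log_part_pos_gt (s : R) : 0 < s -> 0 < log_part e R0 C s -> exp (- C / R0) < s.
Proof.
  intros Hs Hpos; unfold log_part in Hpos.
  assert (0 < Rpower s e) by apply exp_pos.
  assert (0 < R0 * ln s + C) by (destruct (Rlt_le_dec 0 (R0 * ln s + C)); nra).
  rewrite <- (exp_ln s) by exact Hs; apply exp_increasing.
  apply (Rmult_lt_reg_l R0); [exact HR0 |]; unfold Rdiv; field_simplify; lra.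
Qed.

Lemma log_part_at_root : log_part e R0 C (exp (- C / R0)) = 0.
Proof. unfold log_part; rewrite ln_exp; field_simplify; lra. Qed.

Lemma log_part_incr (s1 s2 : R) :
  exp (- C / R0) <= s1 -> s1 < s2 -> log_part e R0 C s1 < log_part e R0 C s2.
Proof.
  intros H1 H12; unfold log_part.
  assert (Hs1 : 0 < s1) by (pose proof (exp_pos (- C / R0)); lra).
  assert (Hln1 : - C / R0 <= ln s1) by (apply ln_ge_of_exp_le, H1).
  assert (0 <= R0 * ln s1 + C).
  { apply (Rmult_le_compat_l R0) in Hln1; [| lra].
    unfold Rdiv in Hln1; field_simplify in Hln1; lra. }
  assert (ln s1 < ln s2) by (apply ln_increasing; assumption).
  assert (R0 * ln s1 + C < R0 * ln s2 + C) by nra.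
  assert (Rpower s1 e < Rpower s2 e) by (apply Rlt_Rpower_l; lra).
  assert (0 < Rpower s1 e) by apply exp_pos.
  nra.
Qed.

Lemma log_part_unbounded (M : R) :
  exists S, 0 < S /\ forall s, S <= s -> M < log_part e R0 C s.
Proof.
  set (x := (Rabs M + Rabs C + 1) / R0).
  exists (exp x); split; [apply exp_pos |]; intros s Hs; unfold log_part.
  assert (0 <= x).
  { unfold x, Rdiv; apply Rmult_le_pos; [| left; apply Rinv_0_lt_compat, HR0].
    pose proof (Rabs_pos M); pose proof (Rabs_pos C); lra. }
  assert (Hln : x <= ln s) by (apply ln_ge_of_exp_le, Hs).
  assert (R0 * ln s >= Rabs M + Rabs C + 1).
  { apply (Rmult_le_compat_l R0) in Hln; [| lra].
    unfold x, Rdiv in Hln; field_simplify in Hln; lra. }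
  assert (1 <= Rpower s e).
  { unfold Rpower; rewrite <- exp_0; apply exp_le_mono, Rmult_le_pos; lra. }
  pose proof (Rle_abs M); pose proof (Rle_abs (- C)) as HC; rewrite Rabs_Ropp in HC.
  pose proof (Rabs_pos M); nra.
Qed.

Lemma log_part_continuous (s : R) : 0 < s -> continuity_pt (log_part e R0 C) s.
Proof.
  intro Hs; apply continuity_pt_filterlim.
  apply (ex_derive_continuous (K := R_AbsRing) (V := R_NormedModule)).
  unfold log_part, Rpower; auto_derive; lra.
Qed.

End LogPart.

(** * Solving [g1 s = K1 (t / s)], [g2 t = K2 (s / t)] *)

(** One of the two rescaled Nehari conditions, read as an equation [g s = K (t / s)]
    in [s > 0]; [sigma] is the zero of [g] past which [g] increases to [+oo]. *)
Record branch (g K : R -> R) (sigma : R) : Prop := {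
  branch_K_mono : forall x y, 0 <= x -> x <= y -> K x <= K y;
  branch_K_pos : forall x, 0 <= x -> 0 < K x;
  branch_K_cont : forall x, continuity_pt K x;
  branch_g_cont : forall s, 0 < s -> continuity_pt g s;
  branch_sigma_pos : 0 < sigma;
  branch_g_sigma : g sigma <= 0;
  branch_g_pos : forall s, 0 < s -> 0 < g s -> sigma < s;
  branch_g_incr : forall s1 s2, sigma <= s1 -> s1 < s2 -> g s1 < g s2;
  branch_g_unbounded : forall M, exists S, 0 < S /\ forall s, S <= s -> M < g s }.

Lemma log_part_branch (e R0 C : R) (K : R -> R) : 0 < e -> 0 < R0 ->
  (forall x y, 0 <= x -> x <= y -> K x <= K y) -> (forall x, 0 <= x -> 0 < K x) ->
  (forall x, continuity_pt K x) ->
  branch (log_part e R0 C) K (exp (- C / R0)).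
Proof.
  intros He HR0 HKmono HKpos HKcont; split; try assumption.
  - intros s Hs; apply log_part_continuous, Hs.
  - apply exp_pos.
  - rewrite log_part_at_root by exact HR0; lra.
  - intros s Hs; apply log_part_pos_gt; assumption.
  - intros s1 s2; apply log_part_incr; assumption.
  - intro M; apply log_part_unbounded; assumption.
Qed.

Section Branch.

Variables (g K : R -> R) (sigma : R).
Hypothesis HB : branch g K sigma.

Lemma root_gt_sigma (s t : R) : 0 < s -> 0 < t -> g s = K (t / s) -> sigma < s.
Proof.
  intros Hs Ht Hroot; apply (branch_g_pos _ _ _ HB s Hs); rewrite Hroot.
  apply (branch_K_pos _ _ _ HB); left; apply Rdiv_lt_0_compat; assumption.
Qed.

Lemma branch_g_le_inv (s1 s2 : R) : sigma <= s1 -> sigma <= s2 -> g s1 <= g s2 -> s1 <= s2.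
Proof.
  intros H1 H2 Hg; destruct (Rle_lt_dec s1 s2) as [| Hlt]; [assumption |].
  pose proof (branch_g_incr _ _ _ HB s2 s1 H2 Hlt); lra.
Qed.

Lemma branch_K_div_le (t1 t2 s1 s2 : R) : 0 < t1 -> t1 <= t2 -> 0 < s2 -> s2 <= s1 ->
  K (t1 / s1) <= K (t2 / s2).
Proof.
  intros Ht1 Ht12 Hs2 Hs21; apply (branch_K_mono _ _ _ HB).
  - left; apply Rdiv_lt_0_compat; lra.
  - unfold Rdiv; apply Rmult_le_compat; try lra.
    + left; apply Rinv_0_lt_compat; lra.
    + apply Rinv_le_contravar; lra.
Qed.

Lemma root_exists (t : R) : 0 < t -> exists s, 0 < s /\ g s = K (t / s).
Proof.
  intros Ht; pose proof (branch_sigma_pos _ _ _ HB) as Hsigma.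
  destruct (branch_g_unbounded _ _ _ HB (K (t / sigma))) as [S [HS Hbig]].
  set (y := Rmax S (sigma + 1)).
  assert (HyS : S <= y) by apply Rmax_l.
  assert (Hy : sigma + 1 <= y) by apply Rmax_r.
  assert (Hlow : g sigma - K (t / sigma) < 0).
  { pose proof (branch_g_sigma _ _ _ HB).
    pose proof (branch_K_pos _ _ _ HB (t / sigma) ltac:(left; apply Rdiv_lt_0_compat; lra)).
    lra. }
  assert (Hhigh : 0 < g y - K (t / y)).
  { pose proof (Hbig y HyS).
    pose proof (branch_K_div_le t t y sigma Ht (Rle_refl t) Hsigma ltac:(lra)).
    lra. }
  destruct (IVT_interv (fun s => g s - K (t / s)) sigma y) as [z [Hz Hroot]];
    [| lra | exact Hlow | exact Hhigh |].
  - intros s Hs; apply continuity_pt_minus; [apply (branch_g_cont _ _ _ HB); lra |].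
    apply (continuity_pt_comp (fun s => t / s) K); [| apply (branch_K_cont _ _ _ HB)].
    apply continuity_pt_div; [apply continuity_pt_const; intros ? ? | apply continuity_pt_id | lra];
      reflexivity.
  - exists z; split; lra.
Qed.

Lemma root_mono (s1 s2 t1 t2 : R) : 0 < s1 -> 0 < s2 -> 0 < t1 -> t1 <= t2 ->
  g s1 = K (t1 / s1) -> g s2 = K (t2 / s2) -> s1 <= s2.
Proof.
  intros Hs1 Hs2 Ht1 Ht12 Hroot1 Hroot2.
  pose proof (root_gt_sigma s1 t1 Hs1 Ht1 Hroot1).
  pose proof (root_gt_sigma s2 t2 Hs2 ltac:(lra) Hroot2).
  destruct (Rle_lt_dec s1 s2) as [| Hlt]; [assumption |].
  pose proof (branch_K_div_le t1 t2 s1 s2 Ht1 Ht12 Hs2 ltac:(lra)).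
  pose proof (branch_g_incr _ _ _ HB s2 s1 ltac:(lra) Hlt); lra.
Qed.

Lemma root_le_max : exists S, 0 < S /\
  forall s t, 0 < s -> 0 < t -> g s = K (t / s) -> s <= Rmax t S.
Proof.
  destruct (branch_g_unbounded _ _ _ HB (K 1)) as [S [HS Hbig]].
  exists S; split; [exact HS |]; intros s t Hs Ht Hroot.
  destruct (Rle_lt_dec s (Rmax t S)) as [| Hlt]; [assumption |].
  pose proof (Rmax_l t S); pose proof (Rmax_r t S).
  pose proof (Hbig s ltac:(lra)).
  pose proof (branch_K_div_le t s s s Ht ltac:(lra) Hs (Rle_refl s)) as HK.
  unfold Rdiv in HK; rewrite Rinv_r in HK by lra; lra.
Qed.

Lemma root_function : exists f : R -> R, forall t, 0 < t -> 0 < f t /\ g (f t) = K (t / f t).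
Proof.
  apply (choice (fun t s => 0 < t -> 0 < s /\ g s = K (t / s))); intro t.
  destruct (Rlt_le_dec 0 t) as [Ht | Ht].
  - destruct (root_exists t Ht) as [s Hs]; exists s; intros _; exact Hs.
  - exists 0; intro; lra.
Qed.

End Branch.

Lemma nondecreasing_fixpoint (T : R -> R) (lo hi : R) : lo <= hi ->
  (forall t, lo <= t <= hi -> lo <= T t <= hi) ->
  (forall x y, lo <= x -> x <= y -> y <= hi -> T x <= T y) ->
  exists m, lo <= m <= hi /\ T m = m.
Proof.
  intros Hlohi Hmaps Hmono.
  set (E := fun t => lo <= t <= hi /\ t <= T t).
  assert (HloE : E lo) by (split; [lra | apply Hmaps; lra]).
  destruct (completeness E) as [m [Hub Hlub]].
  { exists hi; intros x [[_ Hx] _]; exact Hx. }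
  { exists lo; exact HloE. }
  assert (Hlom : lo <= m) by (apply Hub, HloE).
  assert (Hmhi : m <= hi) by (apply Hlub; intros x [[_ Hx] _]; exact Hx).
  assert (HmT : m <= T m).
  { apply Hlub; intros x [[Hx1 Hx2] HxT].
    eapply Rle_trans; [exact HxT | apply Hmono; try lra].
    apply Hub; split; [lra | exact HxT]. }
  assert (HTm : T m <= m).
  { apply Hub; split; [apply Hmaps; lra |].
    apply Hmono; [lra | exact HmT | apply Hmaps; lra]. }
  exists m; split; lra.
Qed.

Section System.

Variables (g1 K1 g2 K2 : R -> R) (sigma1 sigma2 : R).
Hypotheses (HB1 : branch g1 K1 sigma1) (HB2 : branch g2 K2 sigma2).

Definition system_solution (s t : R) : Prop :=
  0 < s /\ 0 < t /\ g1 s = K1 (t / s) /\ g2 t = K2 (s / t).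

Lemma system_solution_ratio_le (s t s' t' : R) :
  system_solution s t -> system_solution s' t' -> t / s <= t' / s' -> s = s' /\ t = t'.
Proof.
  intros (Hs & Ht & E1 & E2) (Hs' & Ht' & E1' & E2') Hratio.
  pose proof (root_gt_sigma _ _ _ HB1 s t Hs Ht E1).
  pose proof (root_gt_sigma _ _ _ HB1 s' t' Hs' Ht' E1').
  pose proof (root_gt_sigma _ _ _ HB2 t s Ht Hs E2).
  pose proof (root_gt_sigma _ _ _ HB2 t' s' Ht' Hs' E2').
  assert (Hss' : s <= s').
  { apply (branch_g_le_inv _ _ _ HB1); try lra; rewrite E1, E1'.
    apply (branch_K_mono _ _ _ HB1); [left; apply Rdiv_lt_0_compat |]; assumption. }
  assert (Ht't : t' <= t).
  { apply (branch_g_le_inv _ _ _ HB2); try lra; rewrite E2, E2'.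
    apply (branch_K_mono _ _ _ HB2); [left; apply Rdiv_lt_0_compat; assumption |].
    apply (Rmult_le_reg_r (t / s * (t' / s')));
      [apply Rmult_lt_0_compat; apply Rdiv_lt_0_compat; assumption |].
    replace (s' / t' * (t / s * (t' / s'))) with (t / s) by (field; lra).
    replace (s / t * (t / s * (t' / s'))) with (t' / s') by (field; lra).
    exact Hratio. }
  assert (Hratio_eq : t / s = t' / s').
  { apply Rle_antisym; [exact Hratio |]; unfold Rdiv.
    apply Rmult_le_compat; try lra; [left; apply Rinv_0_lt_compat; lra |].
    apply Rinv_le_contravar; lra. }
  assert (Hseq : s = s').
  { apply Rle_antisym; [exact Hss' |].
    apply (branch_g_le_inv _ _ _ HB1); try lra; rewrite E1, E1', Hratio_eq; lra. }
  subst s'; split; [reflexivity |].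
  apply (Rmult_eq_reg_r (/ s)); [exact Hratio_eq | apply Rinv_neq_0_compat; lra].
Qed.

Lemma system_solution_unique (s t s' t' : R) :
  system_solution s t -> system_solution s' t' -> s = s' /\ t = t'.
Proof.
  intros Hsol Hsol'; destruct (Rle_lt_dec (t / s) (t' / s')).
  - apply system_solution_ratio_le; assumption.
  - destruct (system_solution_ratio_le s' t' s t) as [-> ->]; [assumption .. | lra |].
    split; reflexivity.
Qed.

Lemma system_solution_exists : exists s t, system_solution s t.
Proof.
  destruct (root_function _ _ _ HB1) as [f1 Hf1].
  destruct (root_function _ _ _ HB2) as [f2 Hf2].
  destruct (root_le_max _ _ _ HB1) as [S1 [HS1 Hmax1]].
  destruct (root_le_max _ _ _ HB2) as [S2 [HS2 Hmax2]].
  pose proof (branch_sigma_pos _ _ _ HB2) as Hsigma2.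
  set (hi := Rmax sigma2 (Rmax S1 S2)).
  assert (Hsigma2hi : sigma2 <= hi) by apply Rmax_l.
  assert (HS1hi : S1 <= hi) by (eapply Rle_trans; [apply Rmax_l | apply Rmax_r]).
  assert (HS2hi : S2 <= hi) by (eapply Rle_trans; [apply Rmax_r | apply Rmax_r]).
  destruct (nondecreasing_fixpoint (fun t => f2 (f1 t)) sigma2 hi) as [t [Ht Hfix]].
  - exact Hsigma2hi.
  - intros t Ht; destruct (Hf1 t ltac:(lra)) as [Hs Hroot1].
    destruct (Hf2 (f1 t) Hs) as [Ht' Hroot2].
    split; [left; apply (root_gt_sigma _ _ _ HB2 _ (f1 t)); assumption |].
    assert (f1 t <= hi)
      by (eapply Rle_trans; [apply (Hmax1 _ t); lra | apply Rmax_lub; lra]).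
    eapply Rle_trans; [apply (Hmax2 _ (f1 t)); assumption | apply Rmax_lub; lra].
  - intros x y Hx Hxy _.
    destruct (Hf1 x ltac:(lra)) as [Hsx Hroot1x]; destruct (Hf1 y ltac:(lra)) as [Hsy Hroot1y].
    destruct (Hf2 (f1 x) Hsx) as [Htx Hroot2x]; destruct (Hf2 (f1 y) Hsy) as [Hty Hroot2y].
    apply (root_mono _ _ _ HB2 _ _ (f1 x) (f1 y)); try assumption.
    apply (root_mono _ _ _ HB1 _ _ x y); try assumption; lra.
  - destruct (Hf1 t ltac:(lra)) as [Hs Hroot1]; destruct (Hf2 (f1 t) Hs) as [_ Hroot2].
    rewrite Hfix in Hroot2.
    exists (f1 t), t; repeat split; try assumption; lra.
Qed.

End System.

(** * The Nehari set along [s u^+ + t u^-] *)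

(** Where [|ln |y|| >= 1] the logarithmic term dominates; elsewhere [|y|] lies in
    [[1/e, e]], so [|y|^q <= e^q] and [y^p >= e^-p]. *)
Lemma rpow_q_le_logterm (j : nat) (q r b0 c0 : R) (b c v : Z -> R) n :
  1 <= r -> 0 < q -> 0 < b0 -> b0 <= b n -> 0 < c n -> c n <= c0 ->
  c n * rpow (Rabs (v n)) q
  <= Rabs (logterm q r c v n)
     + c0 * exp q * exp (INR (2 * j + 2)) / b0 * (b n * v n ^ (2 * j + 2)).
Proof.
  intros Hr Hq Hb0 Hb Hc Hc0.
  set (k := c0 * exp q * exp (INR (2 * j + 2)) / b0).
  assert (Hk : 0 <= k).
  { unfold k, Rdiv; pose proof (exp_pos q); pose proof (exp_pos (INR (2 * j + 2))).
    apply Rmult_le_pos; [apply Rmult_le_pos; [apply Rmult_le_pos |] | left; apply Rinv_0_lt_compat];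
      lra. }
  assert (0 <= k * (b n * v n ^ (2 * j + 2)))
    by (apply Rmult_le_pos; [| apply Rmult_le_pos; [| apply pow_even_ge0]]; lra).
  pose proof (Rabs_pos (logterm q r c v n)).
  unfold logterm in *; destruct (Req_EM_T (v n) 0) as [Hz | Hnz].
  { rewrite Hz in *; rewrite Rabs_R0, rpow_zero_l by (apply Rgt_not_eq, Hq); lra. }
  assert (Hx : 0 < Rabs (v n)) by (apply Rabs_pos_lt, Hnz).
  set (x := Rabs (v n)) in *; rewrite !rpow_of_pos, ln_Rpower by exact Hx.
  assert (0 < Rpower x q) by apply exp_pos.
  destruct (Rle_or_lt 1 (Rabs (ln x))) as [Hbig | Hsmall].
  - rewrite !Rabs_mult, (Rabs_right (c n)), (Rabs_right (Rpower x q)), (Rabs_right r) by lra.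
    assert (c n * Rpower x q * 1 <= c n * Rpower x q * (r * Rabs (ln x)))
      by (apply Rmult_le_compat_l; nra).
    lra.
  - apply Rabs_def2 in Hsmall as [Hln1 Hln2].
    assert (Hxq : Rpower x q <= exp q) by (apply exp_le_mono; nra).
    assert (Hvp : exp (- INR (2 * j + 2)) <= v n ^ (2 * j + 2)).
    { replace (2 * j + 2)%nat with (2 * (j + 1))%nat by lia; rewrite <- pow_even_Rabs.
      fold x; rewrite <- Rpower_pow by exact Hx; apply exp_le_mono.
      pose proof (pos_INR (2 * (j + 1))); nra. }
    assert (Hk_eq : k * (b0 * exp (- INR (2 * j + 2))) = c0 * exp q).
    { unfold k; rewrite exp_Ropp; field; split; [apply Rgt_not_eq, exp_pos | lra]. }
    assert (k * (b0 * exp (- INR (2 * j + 2))) <= k * (b n * v n ^ (2 * j + 2)))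
      by (apply Rmult_le_compat_l, Rmult_le_compat; try lra; left; apply exp_pos).
    assert (c n * Rpower x q <= c0 * exp q) by (apply Rmult_le_compat; lra).
    match goal with |- _ <= Rabs ?L + _ => pose proof (Rabs_pos L) end.
    lra.
Qed.

Lemma ex_sumZ_rpow_upos (q : R) (c v : Z -> R) : (forall n, 0 < c n) -> 0 < q ->
  ex_sumZ (fun n => c n * rpow (Rabs (v n)) q) -> ex_sumZ (fun n => c n * rpow (upos v n) q).
Proof.
  intros Hc Hq; apply ex_sumZ_le; intro n.
  pose proof (Hc n); pose proof (rpow_ge0 (upos v n) q); pose proof (rpow_ge0 (Rabs (v n)) q).
  rewrite Rabs_right by nra.
  destruct (Rlt_le_dec 0 (v n)).
  - rewrite upos_of_pos, Rabs_right by lra; lra.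
  - rewrite upos_of_le0, rpow_zero_l by (lra || apply Rgt_not_eq, Hq); nra.
Qed.

Lemma ex_sumZ_logterm_upos (q r : R) (c v : Z -> R) :
  ex_sumZ (fun n => Rabs (logterm q r c v n)) -> ex_sumZ (logterm q r c (upos v)).
Proof.
  apply ex_sumZ_le; intro n; unfold logterm.
  destruct (Rlt_le_dec 0 (v n)).
  - rewrite upos_of_pos by lra; lra.
  - rewrite upos_of_le0 by lra; destruct (Req_EM_T 0 0); [| lra].
    rewrite Rabs_R0; apply Rabs_pos.
Qed.

Lemma q_mass_pos (q : R) (c v : Z -> R) : (forall n, 0 < c n) -> upos v <> zero_seq ->
  ex_sumZ (fun n => c n * rpow (upos v n) q) -> 0 < q_mass q c v.
Proof.
  intros Hc Hv Hsum; destruct (nonzero_seq_point _ Hv) as [n0 Hn0].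
  apply Rlt_le_trans with (c n0 * rpow (upos v n0) q); unfold q_mass.
  - pose proof (upos_ge0 v n0); rewrite rpow_of_pos by lra.
    apply Rmult_lt_0_compat; [apply Hc | apply exp_pos].
  - apply (sumZ_ge_term (fun n => c n * rpow (upos v n) q)); [| exact Hsum].
    intro n; apply Rmult_le_pos; [left; apply Hc | apply rpow_ge0].
Qed.

Lemma logterm_scale (q r : R) (c w v : Z -> R) (lam : R) n : 0 < lam -> q <> 0 ->
  w n = lam * v n ->
  logterm q r c w n
  = Rpower lam q * (logterm q r c v n + r * ln lam * (c n * rpow (Rabs (v n)) q)).
Proof.
  intros Hlam Hq Hw; unfold logterm; rewrite Hw.
  destruct (Req_EM_T (v n) 0) as [Hz | Hnz].
  - rewrite Hz, Rmult_0_r, Rabs_R0, rpow_zero_l by exact Hq.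
    destruct (Req_EM_T 0 0); [ring | lra].
  - destruct (Req_EM_T (lam * v n) 0) as [Hz |]; [apply Rmult_integral in Hz; lra |].
    assert (Hx : 0 < Rabs (v n)) by (apply Rabs_pos_lt, Hnz).
    rewrite Rabs_mult, (Rabs_right lam), !rpow_of_pos by (lra || apply Rmult_lt_0_compat; lra).
    rewrite !ln_Rpower, ln_mult, <- Rpower_mult_distr by lra; ring.
Qed.

Lemma scale_parts_pointwise (v : Z -> R) s t n :
  exists lam, (lam = s \/ lam = t) /\ scale_parts v s t n = lam * v n.
Proof.
  unfold scale_parts; destruct (Rlt_le_dec 0 (v n)).
  - exists s; split; [left; reflexivity |].
    rewrite upos_of_pos, uneg_of_ge0 by lra; ring.
  - exists t; split; [right; reflexivity |].
    rewrite upos_of_le0, uneg_of_le0 by lra; ring.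
Qed.

Lemma Rabs_logterm_scale_parts_le (q r : R) (c v : Z -> R) s t n :
  0 < s -> 0 < t -> 0 < r -> q <> 0 -> 0 <= c n ->
  Rabs (logterm q r c (scale_parts v s t) n)
  <= (Rpower s q + Rpower t q)
     * (Rabs (logterm q r c v n)
        + r * (Rabs (ln s) + Rabs (ln t)) * (c n * rpow (Rabs (v n)) q)).
Proof.
  intros Hs Ht Hr Hq Hc.
  destruct (scale_parts_pointwise v s t n) as (lam & Hlam & Hw).
  assert (Hmass : 0 <= c n * rpow (Rabs (v n)) q)
    by (apply Rmult_le_pos; [| apply rpow_ge0]; lra).
  assert (0 < Rpower s q) by apply exp_pos; assert (0 < Rpower t q) by apply exp_pos.
  pose proof (Rabs_pos (ln s)); pose proof (Rabs_pos (ln t)).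
  assert (0 < Rpower lam q /\ Rpower lam q <= Rpower s q + Rpower t q
          /\ Rabs (ln lam) <= Rabs (ln s) + Rabs (ln t)) as (Hl1 & Hl2 & Hl3)
    by (destruct Hlam; subst; lra).
  rewrite (logterm_scale q r c _ v lam n) by (destruct Hlam; subst; assumption).
  rewrite Rabs_mult, (Rabs_right (Rpower lam q)) by lra.
  apply Rmult_le_compat; [lra | apply Rabs_pos | exact Hl2 |].
  eapply Rle_trans; [apply Rabs_triang |].
  rewrite Rabs_mult, (Rabs_right (c n * _)), Rabs_mult, (Rabs_right r) by lra.
  apply Rplus_le_compat_l, Rmult_le_compat_r, Rmult_le_compat_l; lra.
Qed.

Lemma pow_even_le_scale (x y k : R) (j : nat) :
  0 <= k -> Rabs x <= k * Rabs y -> x ^ (2 * j + 2) <= k ^ (2 * j + 2) * y ^ (2 * j + 2).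
Proof.
  intros Hk Hxy; apply (pow_even_le_Rabs _ _ j) in Hxy.
  rewrite Rpow_mult_distr in Hxy.
  replace (2 * j + 2)%nat with (2 * (j + 1))%nat in * by lia.
  rewrite pow_even_Rabs in Hxy; exact Hxy.
Qed.

Lemma Rabs_scale_parts_le (v : Z -> R) s t n : 0 < s -> 0 < t ->
  Rabs (scale_parts v s t n) <= (s + t) * Rabs (v n).
Proof.
  intros Hs Ht; destruct (scale_parts_pointwise v s t n) as (lam & Hlam & ->).
  rewrite Rabs_mult, (Rabs_right lam) by (destruct Hlam; subst; lra).
  apply Rmult_le_compat_r; [apply Rabs_pos | destruct Hlam; subst; lra].
Qed.

Lemma Rabs_Delta_scale_parts_le (v : Z -> R) s t n : 0 < s -> 0 < t ->
  Rabs (Delta (scale_parts v s t) n) <= (s + t) * Rabs (Delta v n).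
Proof.
  intros Hs Ht.
  replace (Delta (scale_parts v s t) n) with (s * Delta (upos v) n + t * Delta (uneg v) n)
    by (unfold Delta, scale_parts; ring).
  rewrite <- Rabs_Delta_parts.
  eapply Rle_trans; [apply Rabs_triang |].
  rewrite !Rabs_mult, (Rabs_right s), (Rabs_right t) by lra.
  pose proof (Rabs_pos (Delta (upos v) n)); pose proof (Rabs_pos (Delta (uneg v) n)); nra.
Qed.

Lemma inD_opp (p q r : R) (a b c v : Z -> R) :
  inD p q r a b c v -> inD p q r a b c (fun n => - v n).
Proof.
  intros [HE HL]; split.
  - apply (ex_sumZ_ext _ _) with (2 := HE); intro n.
    rewrite Delta_opp, !Rabs_Ropp; reflexivity.
  - apply (ex_sumZ_ext _ _) with (2 := HL); intro n; unfold logterm.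
    rewrite Rabs_Ropp; destruct (Req_EM_T (- v n) 0), (Req_EM_T (v n) 0); lra.
Qed.

Lemma scal_nonzero_seq (lam : R) (w : Z -> R) :
  lam <> 0 -> w <> zero_seq -> (fun n => lam * w n) <> zero_seq.
Proof.
  intros Hlam Hw Hzero; destruct (nonzero_seq_point _ Hw) as [n Hn].
  pose proof (equal_f Hzero n) as Hzn; unfold zero_seq in Hzn; cbv beta in Hzn.
  apply Rmult_integral in Hzn as [|]; contradiction.
Qed.

Lemma upos_opp_nonzero (v : Z -> R) : uneg v <> zero_seq -> upos (fun n => - v n) <> zero_seq.
Proof.
  intro Hv; rewrite upos_opp.
  replace (fun n => - uneg v n) with (fun n => -1 * uneg v n)
    by (apply functional_extensionality; intro; ring).
  apply scal_nonzero_seq; [lra | exact Hv].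
Qed.

Section Nehari.

Variables (j : nat) (q r b0 c0 : R) (a b c : Z -> R).
Hypotheses (Ha : forall n, 0 < a n) (Hb : forall n, 0 < b n) (Hc : forall n, 0 < c n).
Hypotheses (Hb0 : 0 < b0) (Hbb : forall n, b0 <= b n) (Hcc : forall n, c n <= c0).
Hypotheses (Hr : 1 <= r) (Hpq : INR (2 * j + 2) < q).

Local Notation p := (INR (2 * j + 2)).

Lemma q_pos : 0 < q.
Proof. pose proof (pos_INR (2 * j + 2)); lra. Qed.

Lemma inD_grad_sum (v : Z -> R) :
  inD p q r a b c v -> ex_sumZ (fun n => a n * Delta v n ^ (2 * j + 2)).
Proof.
  intros [HE _]; apply (ex_sumZ_le _ _) with (2 := HE); intro n.
  rewrite !rpow_Rabs_even, Rabs_right; pose proof (Ha n); pose proof (Hb n);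
    pose proof (pow_even_ge0 (Delta v n) j); pose proof (pow_even_ge0 (v n) j); nra.
Qed.

Lemma inD_mass_sum (v : Z -> R) :
  inD p q r a b c v -> ex_sumZ (fun n => b n * v n ^ (2 * j + 2)).
Proof.
  intros [HE _]; apply (ex_sumZ_le _ _) with (2 := HE); intro n.
  rewrite !rpow_Rabs_even, Rabs_right; pose proof (Ha n); pose proof (Hb n);
    pose proof (pow_even_ge0 (Delta v n) j); pose proof (pow_even_ge0 (v n) j); nra.
Qed.

Lemma inD_rpow_sum (v : Z -> R) :
  inD p q r a b c v -> ex_sumZ (fun n => c n * rpow (Rabs (v n)) q).
Proof.
  intros Hv; pose proof (inD_mass_sum v Hv) as Hmass; destruct Hv as [_ HL].
  apply (ex_sumZ_le _ (fun n => Rabs (logterm q r c v n)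
           + c0 * exp q * exp (INR (2 * j + 2)) / b0 * (b n * v n ^ (2 * j + 2)))).
  - intro n; pose proof (rpow_ge0 (Rabs (v n)) q); pose proof (Hc n).
    rewrite Rabs_right by nra; apply rpow_q_le_logterm; auto using q_pos.
  - apply ex_sumZ_plus, ex_sumZ_scal; assumption.
Qed.

Lemma inD_scale_parts (v : Z -> R) s t : inD p q r a b c v -> 0 < s -> 0 < t ->
  inD p q r a b c (scale_parts v s t).
Proof.
  intros Hv Hs Ht; split.
  - apply (ex_sumZ_le _ (fun n => (s + t) ^ (2 * j + 2)
             * (a n * Delta v n ^ (2 * j + 2) + b n * v n ^ (2 * j + 2)))).
    2: apply ex_sumZ_scal, ex_sumZ_plus; [apply inD_grad_sum | apply inD_mass_sum]; exact Hv.
    intro n; rewrite !rpow_Rabs_even; pose proof (Ha n); pose proof (Hb n).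
    pose proof (pow_even_ge0 (Delta (scale_parts v s t) n) j).
    pose proof (pow_even_ge0 (scale_parts v s t n) j).
    rewrite Rabs_right by nra.
    assert (Hst : 0 <= s + t) by lra.
    pose proof (pow_even_le_scale _ _ _ j Hst (Rabs_Delta_scale_parts_le v s t n Hs Ht)).
    pose proof (pow_even_le_scale _ _ _ j Hst (Rabs_scale_parts_le v s t n Hs Ht)).
    nra.
  - apply (ex_sumZ_le _ (fun n => (Rpower s q + Rpower t q)
             * (Rabs (logterm q r c v n)
                + r * (Rabs (ln s) + Rabs (ln t)) * (c n * rpow (Rabs (v n)) q)))).
    + intro n; rewrite Rabs_Rabsolu.
      apply Rabs_logterm_scale_parts_le; try lra; [apply Rgt_not_eq, q_pos | left; apply Hc].
    + apply ex_sumZ_scal, ex_sumZ_plus; [apply Hv | apply ex_sumZ_scal, inD_rpow_sum, Hv].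
Qed.

Lemma branch_of_inD (v : Z -> R) : inD p q r a b c v -> upos v <> zero_seq ->
  branch (nehari_g j q r c v) (hom_part j a b v)
         (exp (- log_mass q r c v / (r * q_mass q c v))).
Proof.
  intros Hv Hvpos; pose proof (inD_grad_sum v Hv); pose proof (inD_mass_sum v Hv).
  apply log_part_branch.
  - lra.
  - apply Rmult_lt_0_compat; [lra |].
    apply q_mass_pos; [exact Hc | exact Hvpos |].
    apply ex_sumZ_rpow_upos; [exact Hc | apply q_pos | apply inD_rpow_sum, Hv].
  - intros x y; apply hom_part_mono; assumption.
  - intros x; apply hom_part_pos; assumption.
  - intros x; apply hom_part_continuous; assumption.
Qed.

Lemma inM_scale_parts_iff (u : Z -> R) s t :
  inD p q r a b c u -> upos u <> zero_seq -> uneg u <> zero_seq -> 0 < s -> 0 < t ->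
  inM p q r a b c (scale_parts u s t)
  <-> system_solution (nehari_g j q r c u) (hom_part j a b u)
        (nehari_g j q r c (fun n => - u n)) (hom_part j a b (fun n => - u n)) s t.
Proof.
  intros Hu Hupos Huneg Hs Ht.
  pose proof (inD_opp _ _ _ _ _ _ _ Hu) as Hu'.
  assert (Hq0 : q <> 0) by (apply Rgt_not_eq, q_pos).
  assert (Hdpos := dI_scale_parts_upos j q r a b c u s t Hq0 Hs Ht
    (ex_sumZ_rpow_upos q c u Hc q_pos (inD_rpow_sum u Hu))
    (ex_sumZ_logterm_upos q r c u (proj2 Hu))).
  assert (Hdneg := dI_scale_parts_uneg j q r a b c u s t Hq0 Hs Ht
    (ex_sumZ_rpow_upos q c _ Hc q_pos (inD_rpow_sum _ Hu'))
    (ex_sumZ_logterm_upos q r c _ (proj2 Hu'))).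
  unfold system_solution; split.
  - intros (_ & _ & _ & E1 & E2); rewrite Hdpos in E1; rewrite Hdneg in E2.
    apply Rmult_integral in E1 as [E1 | E1]; [apply pow_nonzero in E1; lra |].
    apply Rmult_integral in E2 as [E2 | E2]; [apply pow_nonzero in E2; lra |].
    repeat split; lra.
  - intros (_ & _ & E1 & E2); split; [apply inD_scale_parts; assumption |].
    repeat split.
    + replace (upos (scale_parts u s t)) with (fun n => s * upos u n)
        by (apply functional_extensionality; intro; rewrite upos_scale_parts; lra).
      apply scal_nonzero_seq; [lra | exact Hupos].
    + replace (uneg (scale_parts u s t)) with (fun n => t * uneg u n)
        by (apply functional_extensionality; intro; rewrite uneg_scale_parts; lra).
      apply scal_nonzero_seq; [lra | exact Huneg].
    + rewrite Hdpos, E1; ring.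
    + rewrite Hdneg, E2; ring.
Qed.

Lemma scale_parts_nehari_unique (u : Z -> R) :
  inD p q r a b c u -> upos u <> zero_seq -> uneg u <> zero_seq ->
  exists s0 t0 : R, 0 < s0 /\ 0 < t0 /\
    inM p q r a b c (fun n => s0 * upos u n + t0 * uneg u n) /\
    (forall s t : R, 0 < s -> 0 < t ->
       inM p q r a b c (fun n => s * upos u n + t * uneg u n) -> s = s0 /\ t = t0).
Proof.
  intros Hu Hupos Huneg.
  pose proof (branch_of_inD u Hu Hupos) as B1.
  pose proof (branch_of_inD _ (inD_opp _ _ _ _ _ _ _ Hu) (upos_opp_nonzero u Huneg)) as B2.
  destruct (system_solution_exists _ _ _ _ _ _ B1 B2) as (s0 & t0 & Hsol).
  exists s0, t0; destruct Hsol as (Hs0 & Ht0 & Hsol'); split; [| split; [| split]]; try assumption.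
  - apply inM_scale_parts_iff; try assumption; split; [| split]; assumption.
  - intros s t Hs Ht HM; apply inM_scale_parts_iff in HM; try assumption.
    apply (system_solution_unique _ _ _ _ _ _ B1 B2); [exact HM |].
    split; [| split]; assumption.
Qed.

End Nehari.

Theorem lemma2p7 (p q r : R) (a b c : Z -> R)
  (Hp : 1 < p) (Hpq : p < q) (Hp2 : exists k : nat, (0 < k)%nat /\ p / 2 = INR k)
  (Hr : 1 <= r)
  (Ha : forall n, 0 < a n) (Hb : forall n, 0 < b n) (Hc : forall n, 0 < c n)
  (HC1 : cond_C1 b) (HC2 : cond_C2 c)
  (u : Z -> R) (Hu : inD p q r a b c u)
  (Hup : upos u <> zero_seq) (Hun : uneg u <> zero_seq) :
  exists s0 t0 : R, 0 < s0 /\ 0 < t0 /\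
    inM p q r a b c (fun n => s0 * upos u n + t0 * uneg u n) /\
    (forall s t : R, 0 < s -> 0 < t ->
       inM p q r a b c (fun n => s * upos u n + t * uneg u n) -> s = s0 /\ t = t0).
Proof.
  destruct Hp2 as [[| j] [Hk Hpk]]; [lia |].
  replace p with (INR (2 * j + 2)) in *
    by (replace (2 * j + 2)%nat with (2 * S j)%nat by lia; rewrite mult_INR, <- Hpk;
        simpl; lra).
  destruct HC1 as [[b0 [Hb0 Hbb]] _]; destruct HC2 as [[c0 [_ Hcc]] _].
  eapply scale_parts_nehari_unique; eassumption.
Qed.
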